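(* Let $f,g:\mathbb{F}_2^N\to\mathbb{F}_2$. Then $$\langle f,g\rangle^8\le\mathbb{E}_{y,z\in\mathbb{F}_2^N}\langle f_{y,z},g_{y,z}\rangle^2.$$
   Context: $\langle f,g\rangle=\mathbb{E}_{x\in\mathbb{F}_2^N}(-1)^{f(x)+g(x)}$, $f_y(x)=f(x+y)-f(x)$, and $f_{y,z}=(f_y)_z$. *)

From mathcomp Require Import all_boot all_order all_algebra.
Set Implicit Arguments. Unset Strict Implicit. Unset Printing Implicit Defensive.
Import GRing.Theory Num.Theory.
Local Open Scope ring_scope.

(* F_2^N is modelled as row vectors 'rV['F_2]_N; Boolean functions are
   f : 'rV['F_2]_N -> 'F_2.  Real values are taken in rat (exact). *)

Definition sgn2 (a : 'F_2) : rat := (-1) ^+ (nat_of_ord a).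

Definition corr (N : nat) (f g : 'rV['F_2]_N -> 'F_2) : rat :=
  (#|{: 'rV['F_2]_N}|%:R)^-1 * \sum_(x : 'rV['F_2]_N) sgn2 (f x + g x).

Definition deriv2 (N : nat) (f : 'rV['F_2]_N -> 'F_2) (y : 'rV['F_2]_N)
  : 'rV['F_2]_N -> 'F_2 := fun x => f (x + y) - f x.

From mathcomp Require Import all_boot all_order all_algebra.
From mathcomp Require Import ring lra.
Import Order.TTheory GRing.Theory Num.Theory.
Local Open Scope ring_scope.

(* With h x = (-1)^(f x + g x), <f_y,g_y> is the normalised autocorrelation of
   h at y, so E_y <f_y,g_y> = <f,g>^2, and Cauchy-Schwarz gives
   <f,g>^4 <= E_y <f_y,g_y>^2.  Squaring this, Cauchy-Schwarz once more yields
   <f,g>^8 <= E_y <f_y,g_y>^4, and applying the fourth-power bound to each pair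
   (f_y, g_y) finishes. *)

Lemma sgn2D (a b : 'F_2) : sgn2 (a + b) = sgn2 a * sgn2 b.
Proof.
case: a => [[|[|?]] Ha] //; case: b => [[|[|?]] Hb] //;
rewrite /sgn2 /=; apply/eqP; by rewrite ?expr0 ?expr1 ?mul1r ?mulr1.
Qed.

Lemma sgn2N (a : 'F_2) : sgn2 (- a) = sgn2 a.
Proof. by case: a => [[|[|?]] Ha]. Qed.

Lemma sqr_sum_le_card_sum_sqr {R : realDomainType} {I : finType} (a : I -> R) :
  (\sum_i a i) ^+ 2 <= #|I|%:R * \sum_i a i ^+ 2.
Proof.
set s := \sum_i a i; set s2 := \sum_i a i ^+ 2.
have sum_const_sqr : \sum_(i : I) \sum_j a j ^+ 2 = #|I|%:R * s2.
  by rewrite sumr_const mulr_natl.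
have sum_prod : \sum_i \sum_j a i * a j = s ^+ 2.
  by rewrite expr2 mulr_suml; apply: eq_bigr => i _; rewrite mulr_sumr.
have sum_sq_diff : \sum_i \sum_j (a i - a j) ^+ 2 = 2%:R * (#|I|%:R * s2 - s ^+ 2).
  transitivity (\sum_i \sum_(j : I) a i ^+ 2 + \sum_(i : I) \sum_j a j ^+ 2
                - 2%:R * \sum_i \sum_j a i * a j).
    rewrite mulr_sumr -big_split -sumrB; apply: eq_bigr => i _.
    by rewrite mulr_sumr -big_split -sumrB; apply: eq_bigr => j _ /=; ring.
  by rewrite exchange_big /= sum_const_sqr sum_prod; ring.
have : 0 <= \sum_i \sum_j (a i - a j) ^+ 2.
  by apply: sumr_ge0 => i _; apply: sumr_ge0 => j _; apply: sqr_ge0.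
rewrite sum_sq_diff; lra.
Qed.

Lemma sum_addr_shift {V : finZmodType} {R : nmodType} (u : V -> R) (x : V) :
  \sum_z u (x + z) = \sum_z u z.
Proof. by rewrite [RHS](reindex_inj (addrI x)). Qed.

Lemma sum_autocorrelation {V : finZmodType} {R : comPzRingType} (u : V -> R) :
  \sum_y \sum_x u x * u (x + y) = (\sum_x u x) ^+ 2.
Proof.
rewrite exchange_big /=.
under eq_bigr => x _ do rewrite -mulr_sumr (sum_addr_shift u x).
by rewrite expr2 mulr_suml.
Qed.

Section Autocorrelation.
Context {N : nat}.
Local Notation V := 'rV['F_2]_N.
Local Notation n := (#|{: V}|%:R : rat).

Lemma card_rV_F2_gt0 : 0 < n.
Proof. by rewrite ltr0n; apply/card_gt0P; exists 0. Qed.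

Lemma sgn2_deriv2D (f g : V -> 'F_2) (y x : V) :
  sgn2 (deriv2 f y x + deriv2 g y x) =
  sgn2 (f x + g x) * sgn2 (f (x + y) + g (x + y)).
Proof. rewrite /deriv2 !(sgn2D, sgn2N); ring. Qed.

Lemma sum_corr_deriv2 (f g : V -> 'F_2) :
  \sum_y corr (deriv2 f y) (deriv2 g y) = n * corr f g ^+ 2.
Proof.
have n_neq0 : n != 0 by rewrite lt0r_neq0 ?card_rV_F2_gt0.
rewrite /corr; under eq_bigr => y _ do under eq_bigr => x _ do rewrite sgn2_deriv2D.
by rewrite -mulr_sumr (sum_autocorrelation (fun x => sgn2 (f x + g x))); field.
Qed.

Lemma corr_pow4_le (f g : V -> 'F_2) :
  corr f g ^+ 4 <= n^-1 * \sum_y corr (deriv2 f y) (deriv2 g y) ^+ 2.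
Proof.
have n_gt0 := card_rV_F2_gt0.
have := sqr_sum_le_card_sum_sqr (fun y => corr (deriv2 f y) (deriv2 g y)).
rewrite sum_corr_deriv2 exprMn -exprM; set s := \sum_y _ => le_ns.
rewrite -(ler_pM2l (exprn_gt0 2 n_gt0)).
have -> : n ^+ 2 * (n^-1 * s) = n * s by field; rewrite lt0r_neq0.
exact: le_ns.
Qed.

End Autocorrelation.

Theorem corollary4p2 (N : nat) (f g : 'rV['F_2]_N -> 'F_2) :
  corr f g ^+ 8 <=
  (#|{: 'rV['F_2]_N}|%:R ^+ 2)^-1 *
    \sum_(y : 'rV['F_2]_N) \sum_(z : 'rV['F_2]_N)
      corr (deriv2 (deriv2 f y) z) (deriv2 (deriv2 g y) z) ^+ 2.
Proof.
set n : rat := #|{: 'rV['F_2]_N}|%:R.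
have n_gt0 : 0 < n := card_rV_F2_gt0.
pose c y := corr (deriv2 f y) (deriv2 g y).
have c4_ge0 : 0 <= corr f g ^+ 4 by rewrite -[4%N]/(2 * 2)%N exprM sqr_ge0.
have corr8_le_sqr_mean : corr f g ^+ 8 <= (n^-1 * \sum_y c y ^+ 2) ^+ 2.
  have c4_le := corr_pow4_le f g.
  rewrite -[8%N]/(4 * 2)%N exprM [X in X <= _]expr2 [X in _ <= X]expr2.
  exact: (ler_pM c4_ge0 c4_ge0 c4_le c4_le).
have sqr_mean_le_mean_sqr :
    (n^-1 * \sum_y c y ^+ 2) ^+ 2 <= n^-1 * \sum_y (c y ^+ 2) ^+ 2.
  have -> : n^-1 * \sum_y (c y ^+ 2) ^+ 2 =
            n^-1 ^+ 2 * (n * \sum_y (c y ^+ 2) ^+ 2).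
    by field; exact: lt0r_neq0.
  rewrite exprMn ler_wpM2l ?exprn_ge0 ?invr_ge0 ?(ltW n_gt0) //.
  exact: sqr_sum_le_card_sum_sqr (fun y => c y ^+ 2).
have mean_sqr_le : n^-1 * \sum_y (c y ^+ 2) ^+ 2 <= n^-1 * \sum_y
    (n^-1 * \sum_z corr (deriv2 (deriv2 f y) z) (deriv2 (deriv2 g y) z) ^+ 2).
  rewrite ler_pM2l ?invr_gt0 //; apply: ler_sum => y _.
  by rewrite -exprM; apply: corr_pow4_le.
apply: le_trans corr8_le_sqr_mean _.
apply: le_trans sqr_mean_le_mean_sqr (le_trans mean_sqr_le _).
by rewrite -mulr_sumr mulrA -invfM -expr2.
Qed.
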